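(* Every countable crowded $T_1$ space of weight smaller than $\mathfrak{m}_c$ is $\omega$-resolvable, i.e., it can be partitioned into countably many pairwise disjoint dense subsets.
   Context: A space is crowded if it has no isolated points. $\mathfrak{m}_c$ is the least cardinal $\kappa$ such that Martin's Axiom MA$(\kappa)$ for countable posets fails. *)

From Stdlib Require Import Classical.

Set Implicit Arguments.

Record topology (X : Type) : Type := Topology {
  is_open : (X -> Prop) -> Prop;
  open_full : is_open (fun _ => True);
  open_inter : forall U V, is_open U -> is_open V -> is_open (fun x => U x /\ V x);
  open_union : forall F : (X -> Prop) -> Prop,
      (forall U, F U -> is_open U) -> is_open (fun x => exists U, F U /\ U x)
}.

Definition countable (A : Type) : Prop :=
  exists f : A -> nat, forall a b, f a = f b -> a = b.

Definition card_le (J I : Type) : Prop :=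
  exists f : J -> I, forall a b, f a = f b -> a = b.

Definition T1 {X} (t : topology X) : Prop :=
  forall x y : X, x <> y -> exists U, is_open t U /\ U x /\ ~ U y.

Definition isolated {X} (t : topology X) (x : X) : Prop :=
  is_open t (fun y => y = x).

Definition crowded {X} (t : topology X) : Prop :=
  forall x : X, ~ isolated t x.

Definition is_base {X} (t : topology X) (I : Type) (B : I -> X -> Prop) : Prop :=
  (forall i, is_open t (B i)) /\
  (forall U x, is_open t U -> U x -> exists i, B i x /\ forall y, B i y -> U y).

Definition dense {X} (t : topology X) (D : X -> Prop) : Prop :=
  forall U, is_open t U -> (exists x, U x) -> exists x, U x /\ D x.

Definition omega_resolvable {X} (t : topology X) : Prop :=
  exists D : nat -> X -> Prop,
    (forall n, dense t (D n)) /\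
    (forall n m x, n <> m -> D n x -> D m x -> False) /\
    (forall x, exists n, D n x).

(* Partial orders (forcing convention: q <= p means q extends p). *)
Definition is_partial_order {P : Type} (le : P -> P -> Prop) : Prop :=
  (forall p, le p p) /\
  (forall p q r, le p q -> le q r -> le p r) /\
  (forall p q, le p q -> le q p -> p = q).

Definition dense_in_poset {P : Type} (le : P -> P -> Prop) (D : P -> Prop) : Prop :=
  forall p, exists q, D q /\ le q p.

Definition is_filter {P : Type} (le : P -> P -> Prop) (G : P -> Prop) : Prop :=
  (exists p, G p) /\
  (forall p q, G p -> le p q -> G q) /\
  (forall p q, G p -> G q -> exists r, G r /\ le r p /\ le r q).

Definition MA_countable (J : Type) : Prop :=
  forall (P : Type) (le : P -> P -> Prop),
    countable P -> inhabited P -> is_partial_order le ->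
    forall D : J -> P -> Prop,
      (forall j, dense_in_poset le (D j)) ->
      exists G, is_filter le G /\ forall j, exists p, G p /\ D j p.

(* kappa = |I| < m_c, where m_c is the least cardinal for which MA for
   countable posets fails: i.e. MA(lambda) holds for every lambda <= kappa. *)
Definition lt_m_c (I : Type) : Prop :=
  forall J : Type, card_le J I -> MA_countable J.

(* weight(t) < m_c: some base has cardinality < m_c (the weight is the least
   cardinality of a base). *)
Definition weight_lt_m_c {X} (t : topology X) : Prop :=
  exists (I : Type) (B : I -> X -> Prop), is_base t B /\ lt_m_c I.

(** Colour the points of a dense set [R] red and blue by finite approximations:
    the conditions are finite lists of (point, colour) pairs ordered by end
    extension, and a countable [X] makes this poset countable.  For every member
    [B j] of a base of size below m_c, the conditions that colour some point of
    [R] in [B j] red and another one blue are dense (a crowded T1 space has no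
    finite nonempty open sets), so Martin's axiom yields a filter meeting all of
    them; the red points and the remaining points of [R] are then both dense.
    Splitting the whole space, then the remainder, and so on, gives dense pieces
    [D_0, D_1, ...]; the points left over after all steps join [D_0]. *)

From Stdlib Require Import Classical ClassicalEpsilon FunctionalExtensionality
  PropExtensionality List Cantor Lia.
Import ListNotations.

Section CrowdedT1.

Context {X : Type} (t : topology X).

Lemma open_ext (U V : X -> Prop) :
  (forall x, U x <-> V x) -> is_open t U -> is_open t V.
Proof.
  intros HUV HU. replace V with U; [exact HU|].
  extensionality x. apply propositional_extensionality, HUV.
Qed.

Lemma T1_open_setminus_point (U : X -> Prop) (z : X) :
  T1 t -> is_open t U -> is_open t (fun x => U x /\ x <> z).
Proof.
  intros HT HU.
  apply (open_ext (fun x => U x /\ exists V, (is_open t V /\ ~ V z) /\ V x)).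
  - intro x; split.
    + intros [Ux [V [[_ nVz] Vx]]]. split; [exact Ux|]. intros ->. contradiction.
    + intros [Ux Hxz]. split; [exact Ux|].
      destruct (HT x z Hxz) as [V [HV [Vx nVz]]]. exists V; auto.
  - apply open_inter; [exact HU|]. apply open_union. tauto.
Qed.

Lemma crowded_open_neq (U : X -> Prop) (z : X) :
  crowded t -> is_open t U -> (exists u, U u) -> exists x, U x /\ x <> z.
Proof.
  intros Hc HU [u Uu]. apply NNPP. intro Hno.
  assert (Honly : forall x, U x -> x = z).
  { intros x Ux. apply NNPP. intro Hxz. apply Hno. eauto. }
  apply (Hc z). apply (open_ext U); [|exact HU].
  intro x; split; [exact (Honly x)|]. intros ->. rewrite <- (Honly u Uu). exact Uu.
Qed.

Lemma open_setminus_list (U : X -> Prop) (l : list X) :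
  crowded t -> T1 t -> is_open t U -> (exists u, U u) ->
  is_open t (fun x => U x /\ ~ In x l) /\ exists x, U x /\ ~ In x l.
Proof.
  intros Hc HT HU HUne. induction l as [|a l [IHopen IHne]].
  - split.
    + apply (open_ext U); [|exact HU]. intro x; simpl; tauto.
    + destruct HUne as [u Uu]. exists u. simpl. tauto.
  - assert (Hcons : forall x, (U x /\ ~ In x l) /\ x <> a <-> U x /\ ~ In x (a :: l)).
    { intro x. simpl. intuition congruence. }
    split.
    + apply (open_ext _ _ Hcons). apply T1_open_setminus_point; assumption.
    + destruct (crowded_open_neq _ a Hc IHopen IHne) as [x Hx].
      exists x. apply Hcons, Hx.
Qed.

Lemma dense_meets_open_outside_list (R U : X -> Prop) (l : list X) :
  crowded t -> T1 t -> dense t R -> is_open t U -> (exists u, U u) ->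
  exists x, U x /\ R x /\ ~ In x l.
Proof.
  intros Hc HT HR HU HUne.
  destruct (open_setminus_list U l Hc HT HU HUne) as [Hopen Hne].
  destruct (HR _ Hopen Hne) as [x [[Ux nlx] Rx]]. eauto.
Qed.

End CrowdedT1.

Section Colourings.

Context {X : Type}.

Definition extends (q p : list (X * bool)) : Prop := exists l, q = p ++ l.

(* The colour of [x] is the one of its first occurrence, so end extensions
   never change a colour. *)
Definition coloured (p : list (X * bool)) (x : X) (b : bool) : Prop :=
  exists m l, p = m ++ (x, b) :: l /\ ~ In x (map fst m).

Lemma extends_partial_order : is_partial_order extends.
Proof.
  split; [|split].
  - intro p. exists []. symmetry. apply app_nil_r.
  - intros p q r [l1 ->] [l2 ->]. exists (l2 ++ l1). symmetry. apply app_assoc.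
  - intros p q [l1 ->] [l2 Hq].
    assert (Hlen : length l1 = 0).
    { apply (f_equal (@length _)) in Hq. rewrite !length_app in Hq. lia. }
    destruct l1; [apply app_nil_r | discriminate].
Qed.

Lemma coloured_extends p q x b : extends q p -> coloured p x b -> coloured q x b.
Proof.
  intros [l ->] [m [l0 [-> Hm]]]. exists m, (l0 ++ l). split; [|exact Hm].
  rewrite <- app_assoc. reflexivity.
Qed.

Lemma coloured_unique p x b1 b2 : coloured p x b1 -> coloured p x b2 -> b1 = b2.
Proof.
  intros [m1 [l1 [-> H1]]] [m2 [l2 [E H2]]].
  revert m2 E H2. induction m1 as [|[y c] m1 IH]; intros [|[y' c'] m2] E H2;
    simpl in *; injection E; intros; subst; try tauto.
  eapply IH; [|eassumption|]; tauto.
Qed.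

Lemma coloured_new p l x b : ~ In x (map fst p) -> coloured (p ++ (x, b) :: l) x b.
Proof. intro Hx. exists p, l. auto. Qed.

Fixpoint encode (f : X -> nat) (p : list (X * bool)) : nat :=
  match p with
  | [] => 0
  | (x, b) :: l => S (to_nat (to_nat (f x, if b then 1 else 0), encode f l))
  end.

Lemma to_nat_inj (a b : nat * nat) : to_nat a = to_nat b -> a = b.
Proof. intro H. rewrite <- (cancel_of_to a), <- (cancel_of_to b), H. reflexivity. Qed.

Lemma countable_colourings : countable X -> countable (list (X * bool)).
Proof.
  intros [f Hf]. exists (encode f).
  intro p. induction p as [|[x b] p IH]; intros [|[y c] q]; cbn [encode]; intro H;
    try discriminate; [reflexivity|].
  apply eq_add_S, to_nat_inj in H.
  pose proof (f_equal fst H) as Hxb; pose proof (f_equal snd H) as Hpq.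
  cbn [fst snd] in Hxb, Hpq. apply to_nat_inj in Hxb.
  pose proof (f_equal fst Hxb) as Hxy; pose proof (f_equal snd Hxb) as Hbc.
  cbn [fst snd] in Hxy, Hbc.
  rewrite (Hf _ _ Hxy), (IH q Hpq). destruct b, c; easy.
Qed.

End Colourings.

Definition splits {X} (t : topology X) (R D : X -> Prop) : Prop :=
  (forall x, D x -> R x) /\ dense t D /\ dense t (fun x => R x /\ ~ D x).

Section SplitDense.

Context {X : Type} (t : topology X).
Hypotheses (Hcount : countable X) (Hcrowded : crowded t) (HT1 : T1 t).

Lemma extends_colouring_both (R U : X -> Prop) (p : list (X * bool)) :
  dense t R -> is_open t U -> (exists u, U u) ->
  exists q, extends q p /\ exists x y, U x /\ R x /\ coloured q x true /\
                                       U y /\ R y /\ coloured q y false.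
Proof.
  intros HR HU HUne.
  destruct (dense_meets_open_outside_list t R U (map fst p) Hcrowded HT1 HR HU HUne)
    as [x [Ux [Rx Hx]]].
  destruct (dense_meets_open_outside_list t R U (map fst (p ++ [(x, true)]))
              Hcrowded HT1 HR HU HUne) as [y [Uy [Ry Hy]]].
  exists (p ++ [(x, true); (y, false)]). split; [eexists; reflexivity|].
  exists x, y. repeat split; try assumption.
  - apply coloured_new, Hx.
  - replace (p ++ [(x, true); (y, false)]) with ((p ++ [(x, true)]) ++ [(y, false)])
      by (rewrite <- app_assoc; reflexivity).
    apply coloured_new, Hy.
Qed.

Lemma dense_splits (R : X -> Prop) :
  weight_lt_m_c t -> dense t R -> exists D, splits t R D.
Proof.
  intros [I [B [[HBopen HBbase] HI]]] HR.
  assert (MA : MA_countable I) by (apply HI; exists (fun i => i); auto).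
  destruct (MA (list (X * bool)) (@extends X)
              (countable_colourings Hcount) (inhabits []) extends_partial_order
              (fun j p => (exists u, B j u) ->
                 exists x y, B j x /\ R x /\ coloured p x true /\
                             B j y /\ R y /\ coloured p y false))
    as [G [[_ [_ Gdirected]] HGmeets]].
  { intros j p. destruct (classic (exists u, B j u)) as [Hne|Hempty].
    - destruct (extends_colouring_both R (B j) p HR (HBopen j) Hne) as [q [Hqp Hq]].
      exists q. auto.
    - exists p. split; [contradiction|]. apply extends_partial_order. }
  exists (fun x => R x /\ exists p, G p /\ coloured p x true).
  split; [|split].
  - intros x [Rx _]. exact Rx.
  - intros U HU [u Uu]. destruct (HBbase U u HU Uu) as [j [Bju HjU]].
    destruct (HGmeets j) as [p [Gp Hp]].
    destruct (Hp (ex_intro _ u Bju)) as [x [_ [Bx [Rx [Hx _]]]]].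
    exists x. split; [exact (HjU x Bx)|]. split; [exact Rx|]. exists p; auto.
  - intros U HU [u Uu]. destruct (HBbase U u HU Uu) as [j [Bju HjU]].
    destruct (HGmeets j) as [p [Gp Hp]].
    destruct (Hp (ex_intro _ u Bju)) as [_ [y [_ [_ [_ [By [Ry Hy]]]]]]].
    exists y. split; [exact (HjU y By)|]. split; [exact Ry|].
    intros [_ [q [Gq Hq]]]. destruct (Gdirected p q Gp Gq) as [r [_ [Hrp Hrq]]].
    enough (false = true) by discriminate.
    apply (@coloured_unique X r y).
    + eapply coloured_extends; [exact Hrp | exact Hy].
    + eapply coloured_extends; [exact Hrq | exact Hq].
Qed.

End SplitDense.

Section IteratedSplitting.

Context {X : Type} (t : topology X) (split : (X -> Prop) -> X -> Prop).
Hypothesis split_spec : forall R, dense t R -> splits t R (split R).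

Fixpoint remainder (n : nat) : X -> Prop :=
  match n with
  | 0 => fun _ => True
  | S k => fun x => remainder k x /\ ~ split (remainder k) x
  end.

Definition piece (n : nat) : X -> Prop := split (remainder n).

Lemma remainder_dense n : dense t (remainder n).
Proof.
  induction n as [|n IH].
  - intros U _ [u Uu]. exists u. split; [exact Uu | exact I].
  - exact (proj2 (proj2 (split_spec _ IH))).
Qed.

Lemma piece_dense n : dense t (piece n).
Proof. exact (proj1 (proj2 (split_spec _ (remainder_dense n)))). Qed.

Lemma remainder_antitone n m x : n <= m -> remainder m x -> remainder n x.
Proof. induction 1; simpl; tauto. Qed.

Lemma piece_disjoint n m x : n < m -> piece n x -> piece m x -> False.
Proof.
  intros Hnm Hn Hm.
  apply (proj1 (split_spec _ (remainder_dense m))), (remainder_antitone _ _ _ Hnm) in Hm.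
  destruct Hm as [_ Hm]. exact (Hm Hn).
Qed.

Definition part (n : nat) : X -> Prop :=
  match n with
  | 0 => fun x => piece 0 x \/ forall k, ~ piece k x
  | S k => piece (S k)
  end.

Lemma part_disjoint n m x : n < m -> part n x -> part m x -> False.
Proof.
  destruct n as [|n], m as [|m]; simpl; intros Hnm Hn Hm; try lia.
  - destruct Hn as [Hn|Hn]; [exact (piece_disjoint _ _ _ Hnm Hn Hm) | exact (Hn _ Hm)].
  - exact (piece_disjoint _ _ _ Hnm Hn Hm).
Qed.

Lemma omega_resolvable_of_split : omega_resolvable t.
Proof.
  exists part. split; [|split].
  - intros [|n]; [|apply piece_dense].
    intros U HU HUne. destruct (piece_dense 0 U HU HUne) as [x [Ux Hx]].
    exists x. simpl. auto.
  - intros n m x Hnm Hn Hm. destruct (PeanoNat.Nat.lt_total n m) as [H|[H|H]].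
    + exact (part_disjoint _ _ _ H Hn Hm).
    + contradiction.
    + exact (part_disjoint _ _ _ H Hm Hn).
  - intro x. destruct (classic (exists k, piece k x)) as [[[|k] Hk]|Hnone].
    + exists 0. simpl. auto.
    + exists (S k). exact Hk.
    + exists 0. right. intros k Hk. eauto.
Qed.

End IteratedSplitting.

Lemma omega_resolvable_of_dense_splits {X} (t : topology X) :
  (forall R, dense t R -> exists D, splits t R D) -> omega_resolvable t.
Proof.
  intro Hsplit.
  destruct (choice (fun R D => dense t R -> splits t R D)) as [split Hspec].
  { intro R. destruct (classic (dense t R)) as [HR|HR].
    - destruct (Hsplit R HR) as [D HD]. eauto.
    - exists R. contradiction. }
  exact (omega_resolvable_of_split t split Hspec).
Qed.

Theorem mainTheorem3 (X : Type) (t : topology X) :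
  countable X -> crowded t -> T1 t -> weight_lt_m_c t -> omega_resolvable t.
Proof.
  intros Hcount Hcrowded HT1 Hweight.
  apply omega_resolvable_of_dense_splits.
  intros R HR. exact (dense_splits t Hcount Hcrowded HT1 R Hweight HR).
Qed.
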